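(* Fix a constant $c\ge 10$. Consider the random pairwise load balancing process on $n\ge2$ nodes with arbitrary initial load vector $\ell(0)\in\mathbb{N}_0^n$. Let $T_2$ be the first time step $t\ge T_1$ such that $\max_{1\le i\le n}\ell_i(t)\le \varnothing+2c$ and $\min_{1\le i\le n}\ell_i(t)\ge \varnothing-2c$. Then with high probability (probability $1-O(1/n)$), $T_2 = T_1+O(n\log n)$, where the constant in $O(\cdot)$ depends only on $c$.
   Context: Random pairwise load balancing process: $n$ nodes, $m$ tokens, load vector $\ell(t)\in\mathbb{Z}^n$. In each time step $t$, independently, an ordered pair $(u,v)$ of distinct nodes is chosen uniformly at random and loads become $\ell_u(t+1)=\lceil(\ell_u(t)+\ell_v(t))/2\rceil$, $\ell_v(t+1)=\lfloor(\ell_u(t)+\ell_v(t))/2\rfloor$. Average load $\varnothing=m/n$; potential $\Phi(\ell)=\sum_i(\ell_i-\varnothing)^2$; $T_1$ is the first time $t$ with $\Phi(\ell(t))<n$. *)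

From Stdlib Require Import Reals ZArith Arith List Classical ClassicalDescription.
Import ListNotations.
Open Scope R_scope.

(* Nodes are 0, ..., n-1; a load vector is a function nat -> Z (only the
   values at indices < n matter). *)
Definition load := nat -> Z.

Definition step (l : load) (p : nat * nat) : load :=
  let u := fst p in let v := snd p in
  let s := (l u + l v)%Z in
  fun i => if Nat.eqb i u then Z.div (s + 1) 2
           else if Nat.eqb i v then Z.div s 2 else l i.

Definition traj (l0 : load) (s : list (nat * nat)) (t : nat) : load :=
  fold_left step (firstn t s) l0.

Definition pairs (n : nat) : list (nat * nat) :=
  filter (fun p => negb (Nat.eqb (fst p) (snd p))) (list_prod (seq 0 n) (seq 0 n)).

(* All choice sequences of length N (the uniform sample space for N steps). *)
Fixpoint seqs (n N : nat) : list (list (nat * nat)) :=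
  match N with
  | O => [[]]
  | S N' => flat_map (fun s => map (fun p => s ++ [p]) (pairs n)) (seqs n N')
  end.

Definition sumR (n : nat) (f : nat -> R) : R := fold_right Rplus 0 (map f (seq 0 n)).

Definition avg (n : nat) (l0 : load) : R := sumR n (fun i => IZR (l0 i)) / INR n.

Definition Phi (n : nat) (a : R) (l : load) : R := sumR n (fun i => (IZR (l i) - a) ^ 2).

Definition is_T1 (n : nat) (l0 : load) (s : list (nat * nat)) (t1 : nat) : Prop :=
  Phi n (avg n l0) (traj l0 s t1) < INR n /\
  forall t, (t < t1)%nat -> INR n <= Phi n (avg n l0) (traj l0 s t).

Definition good (n : nat) (c : R) (l0 : load) (l : load) : Prop :=
  forall i, (i < n)%nat ->
    IZR (l i) <= avg n l0 + 2 * c /\ avg n l0 - 2 * c <= IZR (l i).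

(* Finite-horizon version of the bad event {T_1 < oo and T_2 > T_1 + D}:
   T_1 occurs, T_1 + D <= N (so the whole window is determined by the first
   N steps), and no time t in [T_1, T_1 + D] is good. *)
Definition bad_event (n : nat) (c D : R) (l0 : load) (N : nat)
    (s : list (nat * nat)) : Prop :=
  exists t1, is_T1 n l0 s t1 /\ INR t1 + D <= INR N /\
    forall t, (t1 <= t)%nat -> INR t <= INR t1 + D -> ~ good n c l0 (traj l0 s t).

Definition prob (n N : nat) (E : list (nat * nat) -> Prop) : R :=
  INR (length (filter (fun s => if excluded_middle_informative (E s) then true else false)
                      (seqs n N)))
  / INR (length (seqs n N)).

(* Measure the remaining imbalance by the threshold potential
     Psi(l) = sum_i phi_c(l_i - avg),   phi_c(y) = (y - c)_+^2 + (-y - c)_+^2,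
   which ignores every node within distance c of the average.
   (1) A balancing step never increases Psi nor the quadratic potential Phi,
       since both are sums of a convex function and a step replaces two loads
       by two loads majorized by them (phi_major, Phi_step_le).
   (2) If Phi(l) < n, at least 3n/4 nodes are within 2 of the average, and
       pairing a node u with such a node halves (at least) the contribution of
       u to Psi.  Averaging over the n(n-1) ordered pairs gives the drift
       E[Psi(next)] <= (1 - 3/(8n)) Psi(l)  (potential_drift).
   (3) Phi stays below n after T_1, so by (2) and induction the expectation of
       Psi(l(T_1 + T)) on {T_1 = t1} is at most (1 - 3/(8n))^T n P(T_1 = t1)
       (expected_stopped_potential).  A bad configuration has Psi >= c^2 >= 1,
       so Markov's inequality, summed over the disjoint events {T_1 = t1},
       bounds the bad event by (1 - 3/(8n))^T n (bad_event_bound).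
   (4) For T ~ 8 n ln n this is at most 1/n (decay_after_8nlnn), so lemma4
       holds with K = 8 and C = 1; only c >= 3 is actually needed. *)

From Stdlib Require Import Reals ZArith Arith List.
From Stdlib Require Import Lia Lra Classical ClassicalDescription.
Import ListNotations.
Open Scope R_scope.

Definition sumL {A} (l : list A) (f : A -> R) : R := fold_right Rplus 0 (map f l).

Lemma sumL_app {A} (l1 l2 : list A) f : sumL (l1 ++ l2) f = sumL l1 f + sumL l2 f.
Proof. unfold sumL; induction l1; simpl; [lra | rewrite IHl1; lra]. Qed.

Lemma sumL_ext {A} (l : list A) f g :
  (forall x, In x l -> f x = g x) -> sumL l f = sumL l g.
Proof. unfold sumL; induction l; simpl; intros H; auto. rewrite H, IHl; auto. Qed.

Lemma sumL_le {A} (l : list A) f g :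
  (forall x, In x l -> f x <= g x) -> sumL l f <= sumL l g.
Proof.
  unfold sumL; induction l; simpl; intros H; [lra |].
  specialize (IHl (fun x h => H x (or_intror h))).
  specialize (H a (or_introl eq_refl)). lra.
Qed.

Lemma sumL_plus {A} (l : list A) f g :
  sumL l (fun x => f x + g x) = sumL l f + sumL l g.
Proof. unfold sumL; induction l; simpl; [lra | rewrite IHl; lra]. Qed.

Lemma sumL_minus {A} (l : list A) f g :
  sumL l (fun x => f x - g x) = sumL l f - sumL l g.
Proof. unfold sumL; induction l; simpl; [lra | rewrite IHl; lra]. Qed.

Lemma sumL_scal {A} (l : list A) r f : sumL l (fun x => r * f x) = r * sumL l f.
Proof. unfold sumL; induction l; simpl; [lra | rewrite IHl; lra]. Qed.

Lemma sumL_nonneg {A} (l : list A) f :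
  (forall x, In x l -> 0 <= f x) -> 0 <= sumL l f.
Proof.
  unfold sumL; induction l; simpl; intros H; [lra |].
  specialize (IHl (fun x h => H x (or_intror h))).
  specialize (H a (or_introl eq_refl)). lra.
Qed.

Lemma sumL_ge_term {A} (l : list A) f x :
  In x l -> (forall y, In y l -> 0 <= f y) -> f x <= sumL l f.
Proof.
  unfold sumL; induction l; simpl; intros Hx H; [contradiction |].
  pose proof (H a (or_introl eq_refl)) as Ha.
  pose proof (sumL_nonneg l f (fun y h => H y (or_intror h))) as Hl. unfold sumL in Hl.
  destruct Hx as [<- | Hx]; [lra |].
  specialize (IHl Hx (fun y h => H y (or_intror h))). lra.
Qed.

Lemma sumL_length {A} (l : list A) : sumL l (fun _ => 1) = INR (length l).
Proof. unfold sumL; induction l; simpl; auto. rewrite IHl. destruct (length l); simpl; lra. Qed.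

Lemma sumL_zero {A} (l : list A) : sumL l (fun _ => 0) = 0.
Proof. unfold sumL; induction l; simpl; auto. rewrite IHl; lra. Qed.

Lemma sumL_filter {A} (l : list A) (P : A -> bool) f :
  sumL (filter P l) f = sumL l (fun x => if P x then f x else 0).
Proof. unfold sumL; induction l; simpl; auto. destruct (P a); simpl; rewrite IHl; lra. Qed.

Lemma sumL_map {A B} (l : list A) (g : A -> B) f :
  sumL (map g l) f = sumL l (fun x => f (g x)).
Proof. unfold sumL. rewrite map_map. reflexivity. Qed.

Lemma sumL_prod {A B} (l1 : list A) (l2 : list B) f :
  sumL (list_prod l1 l2) f = sumL l1 (fun u => sumL l2 (fun v => f (u, v))).
Proof.
  induction l1; simpl; [reflexivity |].
  rewrite sumL_app, IHl1, sumL_map. reflexivity.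
Qed.

Lemma sumL_flat_map {A B} (l : list A) (g : A -> list B) f :
  sumL (flat_map g l) f = sumL l (fun x => sumL (g x) f).
Proof. induction l; simpl; [reflexivity |]. rewrite sumL_app, IHl. reflexivity. Qed.

Lemma sumL_swap {A B} (l1 : list A) (l2 : list B) f :
  sumL l1 (fun x => sumL l2 (fun y => f x y)) = sumL l2 (fun y => sumL l1 (fun x => f x y)).
Proof.
  induction l1; simpl.
  - symmetry. apply sumL_zero.
  - change (sumL l2 (fun y => f a y) + sumL l1 (fun x => sumL l2 (fun y => f x y))
            = sumL l2 (fun y => f a y + sumL l1 (fun x => f x y))).
    rewrite IHl1, <- sumL_plus. reflexivity.
Qed.

Lemma sumL_indicators_le1 {A} (l : list A) f : NoDup l ->
  (forall x, In x l -> f x = 0 \/ f x = 1) ->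
  (forall x y, In x l -> In y l -> f x = 1 -> f y = 1 -> x = y) -> sumL l f <= 1.
Proof.
  unfold sumL; induction l; simpl; intros ND H U; [lra |]. inversion ND; subst.
  destruct (H a (or_introl eq_refl)) as [E | E]; rewrite E.
  - enough (fold_right Rplus 0 (map f l) <= 1) by lra. apply IHl; auto.
  - enough (sumL l f = sumL l (fun _ => 0)) by (rewrite sumL_zero in *; unfold sumL in *; lra).
    apply sumL_ext. intros x Hx.
    destruct (H x (or_intror Hx)) as [E' | E']; auto.
    assert (a = x) by (apply U; auto). subst; contradiction.
Qed.

Lemma sumR_sumL n f : sumR n f = sumL (seq 0 n) f.
Proof. reflexivity. Qed.

Lemma sumR_ext n f g : (forall i, (i < n)%nat -> f i = g i) -> sumR n f = sumR n g.
Proof. intros H. apply sumL_ext. intros x Hx. apply in_seq in Hx. apply H; lia. Qed.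

Lemma sumR_le n f g : (forall i, (i < n)%nat -> f i <= g i) -> sumR n f <= sumR n g.
Proof. intros H. apply sumL_le. intros x Hx. apply in_seq in Hx. apply H; lia. Qed.

Lemma sumR_nonneg n f : (forall i, (i < n)%nat -> 0 <= f i) -> 0 <= sumR n f.
Proof. intros H. apply sumL_nonneg. intros x Hx. apply in_seq in Hx. apply H; lia. Qed.

Lemma sumR_const n r : sumR n (fun _ => r) = r * INR n.
Proof.
  rewrite sumR_sumL, (sumL_ext _ _ (fun _ : nat => r * 1)) by (intros; ring).
  rewrite sumL_scal, sumL_length, length_seq. reflexivity.
Qed.

Lemma sumR_plus n f g : sumR n (fun i => f i + g i) = sumR n f + sumR n g.
Proof. apply sumL_plus. Qed.

Lemma sumR_scal n r f : sumR n (fun i => r * f i) = r * sumR n f.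
Proof. apply sumL_scal. Qed.

Lemma sumR_S n f : sumR (S n) f = sumR n f + f n.
Proof.
  rewrite !sumR_sumL, seq_S, sumL_app. unfold sumL at 2; simpl. lra.
Qed.

Lemma sumR_update1 n (f g : nat -> R) u : (u < n)%nat ->
  (forall i, i <> u -> g i = f i) -> sumR n g = sumR n f + (g u - f u).
Proof.
  intros Hu H.
  assert (Hm : forall m, sumR m g = sumR m f + (if Nat.ltb u m then g u - f u else 0)).
  { induction m.
    - unfold sumR; simpl. lra.
    - rewrite !sumR_S, IHm.
      destruct (Nat.ltb_spec u m), (Nat.ltb_spec u (S m)); try lia.
      + rewrite (H m) by lia. lra.
      + replace m with u by lia. lra.
      + rewrite (H m) by lia. lra. }
  rewrite Hm. destruct (Nat.ltb_spec u n); [lra | lia].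
Qed.

Lemma sumR_update2 n (f g : nat -> R) u v : u <> v -> (u < n)%nat -> (v < n)%nat ->
  (forall i, i <> u -> i <> v -> g i = f i) ->
  sumR n g = sumR n f + (g u - f u) + (g v - f v).
Proof.
  intros Huv Hu Hv H.
  set (m := fun i => if Nat.eqb i u then g i else f i).
  assert (E1 : sumR n m = sumR n f + (m u - f u)).
  { apply sumR_update1; auto. intros i Hi. unfold m. destruct (Nat.eqb_spec i u); easy. }
  assert (E2 : sumR n g = sumR n m + (g v - m v)).
  { apply sumR_update1; auto. intros i Hi. unfold m. destruct (Nat.eqb_spec i u); auto. }
  rewrite E2, E1. unfold m. rewrite Nat.eqb_refl. destruct (Nat.eqb_spec v u); [lia | lra].
Qed.

Definition pplus (x : R) : R := Rmax 0 x.
Definition psi (c y : R) : R := pplus (y - c) * pplus (y - c).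
Definition phi (c y : R) : R := psi c y + psi c (- y).

Lemma pplus_cases x : (x <= 0 /\ pplus x = 0) \/ (0 <= x /\ pplus x = x).
Proof. unfold pplus, Rmax. destruct (Rle_dec 0 x); [right | left]; lra. Qed.

Lemma pplus_mono a b : a <= b -> pplus a <= pplus b.
Proof.
  intros. destruct (pplus_cases a) as [[? ->] | [? ->]];
    destruct (pplus_cases b) as [[? ->] | [? ->]]; lra.
Qed.

Lemma psi_nonneg c y : 0 <= psi c y.
Proof. unfold psi. destruct (pplus_cases (y - c)) as [[_ ->] | [? ->]]; nra. Qed.

Lemma phi_nonneg c y : 0 <= phi c y.
Proof. unfold phi. pose proof (psi_nonneg c y); pose proof (psi_nonneg c (- y)); lra. Qed.

Lemma psi_tangent c x y : psi c x + 2 * pplus (x - c) * (y - x) <= psi c y.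
Proof.
  unfold psi. destruct (pplus_cases (x - c)) as [[? ->] | [? ->]];
    destruct (pplus_cases (y - c)) as [[? ->] | [? ->]].
  - lra.
  - nra.
  - assert (0 <= (x - c) * (c - y)) by (apply Rmult_le_pos; lra). nra.
  - pose proof (Rle_0_sqr (y - x)). unfold Rsqr in *. nra.
Qed.

Lemma psi_major c lo hi p q : lo <= q -> q <= p -> p <= hi -> p + q = hi + lo ->
  psi c p + psi c q <= psi c hi + psi c lo.
Proof.
  intros. pose proof (psi_tangent c p hi). pose proof (psi_tangent c q lo).
  pose proof (pplus_mono (q - c) (p - c) ltac:(lra)).
  pose proof (pplus_cases (q - c)). pose proof (pplus_cases (p - c)). nra.
Qed.

Lemma phi_major c lo hi p q : lo <= q -> q <= p -> p <= hi -> p + q = hi + lo ->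
  phi c p + phi c q <= phi c hi + phi c lo.
Proof.
  intros. unfold phi. pose proof (psi_major c lo hi p q).
  pose proof (psi_major c (- hi) (- lo) (- q) (- p)). lra.
Qed.

Lemma psi_zero c y : y <= c -> psi c y = 0.
Proof. intros. unfold psi. destruct (pplus_cases (y - c)) as [[? ->] | [? ->]]; nra. Qed.

Lemma psi_above c y : c <= y -> psi c y = (y - c) * (y - c).
Proof. intros. unfold psi. destruct (pplus_cases (y - c)) as [[? ->] | [? ->]]; nra. Qed.

Lemma psi_le c y z : y - c <= z -> 0 <= z -> psi c y <= z * z.
Proof. intros. unfold psi. destruct (pplus_cases (y - c)) as [[? ->] | [? ->]]; nra. Qed.

Lemma phi_small c y : Rabs y <= c -> phi c y = 0.
Proof.
  intros. unfold phi, Rabs in *. destruct (Rcase_abs y); rewrite !psi_zero; lra.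
Qed.

Lemma phi_le_sq c y : 0 <= c -> phi c y <= y * y.
Proof.
  intros. unfold phi, psi. destruct (pplus_cases (y - c)) as [[? ->] | [? ->]];
    destruct (pplus_cases (- y - c)) as [[? ->] | [? ->]]; nra.
Qed.

Lemma phi_big c y : 0 <= c -> 2 * c < Rabs y -> c * c <= phi c y.
Proof.
  intros. unfold phi, psi, Rabs in *. destruct (Rcase_abs y);
    destruct (pplus_cases (y - c)) as [[? ->] | [? ->]];
    destruct (pplus_cases (- y - c)) as [[? ->] | [? ->]]; nra.
Qed.

(* (p', q') is how a balancing step splits the deviations (p, q) of two
   loads: the sum is kept, p' >= q', p' does not exceed one of p, q, and
   p' is at most half the sum rounded up. *)
Definition balanced_split (p q p' q' : R) : Prop :=
  p' + q' = p + q /\ q' <= p' /\ (p' <= p \/ p' <= q) /\ 2 * p' <= p + q + 1.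

Lemma step_balanced_split (A B : Z) (a : R) :
  balanced_split (IZR A - a) (IZR B - a)
    (IZR ((A + B + 1) / 2) - a) (IZR ((A + B) / 2) - a).
Proof.
  set (A' := ((A + B + 1) / 2)%Z). set (B' := ((A + B) / 2)%Z).
  assert (H : (A' + B' = A + B /\ B' <= A' /\ (A' <= A \/ A' <= B) /\ 2 * A' <= A + B + 1)%Z)
    by (unfold A', B'; Z.div_mod_to_equations; lia).
  destruct H as (E1 & E2 & E3 & E4).
  apply (f_equal IZR) in E1. rewrite !plus_IZR in E1.
  apply IZR_le in E2. apply IZR_le in E4. rewrite !plus_IZR, mult_IZR in E4.
  unfold balanced_split.
  destruct E3 as [E3 | E3]; apply IZR_le in E3; repeat split; lra.
Qed.

Lemma phi_split_le c p q p' q' : balanced_split p q p' q' ->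
  phi c p' + phi c q' <= phi c p + phi c q.
Proof.
  intros (Hs & Hord & Hmax & _).
  destruct (Rle_dec p q).
  - rewrite (Rplus_comm (phi c p)). apply phi_major; lra.
  - apply phi_major; lra.
Qed.

Lemma sq_split_le p q p' q' : balanced_split p q p' q' -> p' * p' + q' * q' <= p * p + q * q.
Proof. intros (Hs & Hord & Hmax & _). destruct Hmax; nra. Qed.

Lemma phi_split_typical c p q p' q' : 3 <= c -> Rabs q <= 2 ->
  balanced_split p q p' q' -> phi c p' + phi c q' <= phi c p / 2.
Proof.
  intros Hc Hq Hsplit. pose proof (phi_split_le c p q p' q' Hsplit) as M.
  destruct Hsplit as (Hs & Hord & Hmax & Hhalf).
  rewrite (phi_small c q) in M by lra.
  assert (Hq' : -2 <= q <= 2) by (unfold Rabs in Hq; destruct (Rcase_abs q); lra).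
  destruct (Rle_dec (Rabs p) c) as [Hp | Hp].
  - rewrite (phi_small c p) in * by lra. lra.
  - unfold Rabs in Hp. unfold phi. destruct (Rcase_abs p).
    + rewrite (psi_zero c p), (psi_zero c p'), (psi_zero c q'), (psi_above c (- p)) by lra.
      pose proof (psi_le c (- p') ((- p - c) / 2) ltac:(lra) ltac:(lra)).
      pose proof (psi_le c (- q') ((- p - c) / 2) ltac:(lra) ltac:(lra)). lra.
    + rewrite (psi_zero c (- p)), (psi_zero c (- p')), (psi_zero c (- q')), (psi_above c p) by lra.
      pose proof (psi_le c p' ((p - c) / 2) ltac:(lra) ltac:(lra)).
      pose proof (psi_le c q' ((p - c) / 2) ltac:(lra) ltac:(lra)). lra.
Qed.

Definition Psi (n : nat) (c a : R) (L : load) : R := sumR n (fun i => phi c (IZR (L i) - a)).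

Lemma Psi_nonneg n c a L : 0 <= Psi n c a L.
Proof. apply sumR_nonneg. intros. apply phi_nonneg. Qed.

Lemma Psi_le_Phi n c a L : 0 <= c -> Psi n c a L <= Phi n a L.
Proof.
  intros. apply sumR_le. intros i _. simpl. rewrite Rmult_1_r. apply phi_le_sq; auto.
Qed.

Lemma sum_after_step n (g : Z -> R) (L : load) u v :
  u <> v -> (u < n)%nat -> (v < n)%nat ->
  sumR n (fun i => g (step L (u, v) i)) = sumR n (fun i => g (L i))
    + (g ((L u + L v + 1) / 2)%Z - g (L u)) + (g ((L u + L v) / 2)%Z - g (L v)).
Proof.
  intros Huv Hu Hv.
  rewrite (sumR_update2 n (fun i => g (L i)) _ u v) by
    (auto; intros i Hi Hj; unfold step; simpl;
     destruct (Nat.eqb_spec i u), (Nat.eqb_spec i v); easy).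
  unfold step; simpl. rewrite Nat.eqb_refl. destruct (Nat.eqb_spec v u); [lia |].
  rewrite Nat.eqb_refl. reflexivity.
Qed.

Lemma in_pairs n u v : In (u, v) (pairs n) -> u <> v /\ (u < n)%nat /\ (v < n)%nat.
Proof.
  unfold pairs. rewrite filter_In, in_prod_iff, !in_seq. simpl.
  destruct (Nat.eqb_spec u v); simpl; intuition (try lia; discriminate).
Qed.

Lemma Phi_step_le n a L p : In p (pairs n) -> Phi n a (step L p) <= Phi n a L.
Proof.
  destruct p as [u v]. intros Hp. destruct (in_pairs n u v Hp) as (Huv & Hu & Hv).
  unfold Phi. rewrite (sum_after_step n (fun z => (IZR z - a) ^ 2)) by auto.
  pose proof (sq_split_le _ _ _ _ (step_balanced_split (L u) (L v) a)). simpl. lra.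
Qed.

Definition pair_gain (c a : R) (L : load) (u v : nat) : R :=
  if Rle_dec (Rabs (IZR (L v) - a)) 2 then phi c (IZR (L u) - a) / 2 else 0.

Lemma Psi_step_le n c a L u v : 3 <= c -> u <> v -> (u < n)%nat -> (v < n)%nat ->
  Psi n c a (step L (u, v)) <= Psi n c a L - pair_gain c a L u v.
Proof.
  intros Hc Huv Hu Hv. unfold Psi.
  rewrite (sum_after_step n (fun z => phi c (IZR z - a))) by auto.
  pose proof (step_balanced_split (L u) (L v) a) as Hsplit.
  unfold pair_gain. destruct (Rle_dec _ 2) as [Hq | _].
  - pose proof (phi_split_typical c _ _ _ _ Hc Hq Hsplit). pose proof (phi_nonneg c (IZR (L v) - a)). lra.
  - pose proof (phi_split_le c _ _ _ _ Hsplit). lra.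
Qed.

Lemma sum_over_pairs n G : sumL (pairs n) G =
  sumR n (fun u => sumR n (fun v => if Nat.eqb u v then 0 else G (u, v))).
Proof.
  unfold pairs. rewrite sumL_filter, sumL_prod. apply sumL_ext. intros u _.
  apply sumL_ext. intros v _. simpl. destruct (Nat.eqb u v); reflexivity.
Qed.

Definition npairs (n : nat) : R := INR (length (pairs n)).

Lemma npairs_le n : npairs n <= INR n * INR n.
Proof.
  unfold npairs. rewrite <- sumL_length, sum_over_pairs.
  apply Rle_trans with (sumR n (fun _ => sumR n (fun _ => 1))).
  - apply sumR_le; intros; apply sumR_le; intros. destruct (Nat.eqb _ _); lra.
  - rewrite !sumR_const. lra.
Qed.

Lemma npairs_pos n : (2 <= n)%nat -> 0 < npairs n.
Proof.
  intros Hn. unfold npairs.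
  assert (H : In (0%nat, 1%nat) (pairs n)).
  { unfold pairs. apply filter_In. split; [| reflexivity]. apply in_prod; apply in_seq; lia. }
  destruct (pairs n); [contradiction |]. simpl length. rewrite S_INR.
  pose proof (pos_INR (length l)). lra.
Qed.

Lemma many_typical_nodes n (x : nat -> R) : sumR n (fun i => x i ^ 2) < INR n ->
  3 * INR n / 4 <= sumR n (fun v => if Rle_dec (Rabs (x v)) 2 then 1 else 0).
Proof.
  intros H.
  set (typ := sumR n (fun v => if Rle_dec (Rabs (x v)) 2 then 1 else 0)).
  set (atyp := sumR n (fun v => if Rle_dec (Rabs (x v)) 2 then 0 else 1)).
  assert (E : typ + atyp = INR n).
  { unfold typ, atyp. rewrite <- sumR_plus, <- (Rmult_1_l (INR n)), <- sumR_const.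
    apply sumR_ext. intros. destruct (Rle_dec _ _); lra. }
  assert (4 * atyp <= sumR n (fun i => x i ^ 2)).
  { unfold atyp. rewrite <- sumR_scal. apply sumR_le. intros i _.
    destruct (Rle_dec (Rabs (x i)) 2) as [_ | Hx]; [nra |].
    unfold Rabs in Hx. destruct (Rcase_abs (x i)); nra. }
  lra.
Qed.

Section Drift.
Variables (n : nat) (c a : R) (L : load).
Hypotheses (Hn : (2 <= n)%nat) (Hc : 3 <= c) (HPhi : Phi n a L < INR n).

(* Each atypical node u gains from its pairings with the >= 3n/4 typical
   nodes (a node with phi_c > 0 is itself atypical, so v = u costs nothing). *)
Lemma gain_of_node u :
  3 * INR n / 8 * phi c (IZR (L u) - a) <=
  sumR n (fun v => if Nat.eqb u v then 0 else pair_gain c a L u v).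
Proof.
  set (x := fun i => IZR (L i) - a). change (IZR (L u) - a) with (x u).
  pose proof (phi_nonneg c (x u)).
  destruct (Req_dec (phi c (x u)) 0) as [Z | Z].
  - rewrite Z, Rmult_0_r. apply sumR_nonneg. intros. unfold pair_gain.
    fold (x u). rewrite Z. destruct (Nat.eqb u i), (Rle_dec (Rabs (IZR (L i) - a)) 2); lra.
  - assert (Hu : ~ Rabs (x u) <= 2) by (intro; apply Z, phi_small; lra).
    rewrite (sumR_ext n _ (fun v => phi c (x u) / 2 * (if Rle_dec (Rabs (x v)) 2 then 1 else 0))).
    + rewrite sumR_scal. pose proof (many_typical_nodes n x HPhi) as Htyp.
      apply (Rmult_le_compat_l (phi c (x u) / 2)) in Htyp; lra.
    + intros v _. unfold pair_gain. fold (x u) (x v).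
      destruct (Nat.eqb_spec u v) as [<- | _].
      * destruct (Rle_dec (Rabs (x u)) 2); [tauto | lra].
      * destruct (Rle_dec (Rabs (x v)) 2); lra.
Qed.

Lemma potential_drift :
  sumL (pairs n) (fun p => Psi n c a (step L p)) / npairs n
    <= (1 - 3 / (8 * INR n)) * Psi n c a L.
Proof.
  set (P := Psi n c a L). set (M := npairs n).
  assert (HM : 0 < M) by (apply npairs_pos; auto).
  assert (HMn : M <= INR n * INR n) by apply npairs_le.
  assert (HnR : 2 <= INR n) by (apply (le_INR 2 n) in Hn; simpl in Hn; lra).
  assert (HP : 0 <= P) by apply Psi_nonneg.
  assert (Hgain : 3 * INR n / 8 * P <= sumL (pairs n) (fun p => pair_gain c a L (fst p) (snd p))).
  { rewrite sum_over_pairs. unfold P, Psi. rewrite <- sumR_scal.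
    apply sumR_le. intros u _. apply gain_of_node. }
  assert (Hsum : sumL (pairs n) (fun p => Psi n c a (step L p))
                 <= sumL (pairs n) (fun p => P - pair_gain c a L (fst p) (snd p))).
  { apply sumL_le. intros [u v] Hp. destruct (in_pairs n u v Hp) as (? & ? & ?).
    apply Psi_step_le; auto. }
  rewrite sumL_minus, (sumL_ext _ (fun _ => P) (fun _ => P * 1)), sumL_scal, sumL_length in Hsum
    by (intros; ring).
  change (INR (length (pairs n))) with M in Hsum.
  assert (P * M / INR n <= INR n * P).
  { unfold Rdiv. apply (Rmult_le_reg_r (INR n)); [lra |].
    rewrite Rmult_assoc, Rinv_l by lra. nra. }
  apply (Rmult_le_reg_r M); [auto |].
  replace ((1 - 3 / (8 * INR n)) * P * M) with (P * M - 3 / 8 * (P * M / INR n)) by (field; lra).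
  unfold Rdiv at 1. rewrite Rmult_assoc, Rinv_l by lra. lra.
Qed.
End Drift.

Definition Avg (n N : nat) (F : list (nat * nat) -> R) : R :=
  sumL (seqs n N) F / INR (length (seqs n N)).

Lemma prob_Avg n N E :
  prob n N E = Avg n N (fun s => if excluded_middle_informative (E s) then 1 else 0).
Proof.
  unfold prob, Avg. rewrite <- sumL_length, sumL_filter. f_equal.
  apply sumL_ext. intros. destruct (excluded_middle_informative _); reflexivity.
Qed.

Lemma seqs_length_S n N : INR (length (seqs n (S N))) = INR (length (seqs n N)) * npairs n.
Proof.
  rewrite <- !sumL_length. simpl seqs. rewrite sumL_flat_map.
  rewrite (sumL_ext _ _ (fun _ => npairs n * 1)), sumL_scal; [ring |].
  intros. rewrite sumL_map, sumL_length. unfold npairs. ring.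
Qed.

Lemma seqs_length_pos n N : (2 <= n)%nat -> 0 < INR (length (seqs n N)).
Proof.
  intros Hn. induction N; [simpl; lra |].
  rewrite seqs_length_S. apply Rmult_lt_0_compat; auto. apply npairs_pos; auto.
Qed.

Lemma in_seqs n N s : In s (seqs n N) -> length s = N /\ Forall (fun p => In p (pairs n)) s.
Proof.
  revert s. induction N; simpl; intros s H.
  - destruct H as [<- | []]. auto.
  - apply in_flat_map in H. destruct H as [s0 [H0 H1]].
    apply in_map_iff in H1. destruct H1 as [p [<- Hp]].
    destruct (IHN s0 H0) as [E F]. split.
    + rewrite length_app; simpl; lia.
    + apply Forall_app; auto.
Qed.

Section Averages.
Variables (n : nat) (Hn : (2 <= n)%nat).

Lemma Avg_S N F :
  Avg n (S N) F = Avg n N (fun s => sumL (pairs n) (fun p => F (s ++ [p])) / npairs n).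
Proof.
  unfold Avg. rewrite seqs_length_S. simpl seqs. rewrite sumL_flat_map.
  pose proof (npairs_pos n Hn). pose proof (seqs_length_pos n N Hn).
  rewrite (sumL_ext _ (fun x => sumL _ F) (fun s => sumL (pairs n) (fun p => F (s ++ [p]))))
    by (intros; apply sumL_map).
  rewrite (sumL_ext _ (fun s => sumL _ _ / npairs n)
             (fun s => / npairs n * sumL (pairs n) (fun p => F (s ++ [p])))) by (intros; unfold Rdiv; ring).
  rewrite sumL_scal. field. lra.
Qed.

Lemma Avg_le N F G : (forall s, In s (seqs n N) -> F s <= G s) -> Avg n N F <= Avg n N G.
Proof.
  intros. unfold Avg, Rdiv. apply Rmult_le_compat_r.
  - left. apply Rinv_0_lt_compat, seqs_length_pos; auto.
  - apply sumL_le; auto.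
Qed.

Lemma Avg_ext N F G : (forall s, In s (seqs n N) -> F s = G s) -> Avg n N F = Avg n N G.
Proof. intros. unfold Avg. rewrite (sumL_ext _ F G); auto. Qed.

Lemma Avg_const N r : Avg n N (fun _ => r) = r.
Proof.
  unfold Avg. pose proof (seqs_length_pos n N Hn).
  rewrite (sumL_ext _ _ (fun _ => r * 1)), sumL_scal, sumL_length by (intros; ring).
  field. lra.
Qed.

Lemma Avg_scal N r F : Avg n N (fun s => r * F s) = r * Avg n N F.
Proof. unfold Avg. rewrite sumL_scal. unfold Rdiv. ring. Qed.

Lemma Avg_sumL {A} N (l : list A) g :
  Avg n N (fun s => sumL l (fun t => g t s)) = sumL l (fun t => Avg n N (g t)).
Proof.
  unfold Avg. rewrite sumL_swap. unfold Rdiv. rewrite Rmult_comm, <- sumL_scal.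
  apply sumL_ext. intros. apply Rmult_comm.
Qed.

Lemma Avg_horizon k F : (forall s p, (k <= length s)%nat -> F (s ++ [p]) = F s) ->
  forall N, (k <= N)%nat -> Avg n N F = Avg n k F.
Proof.
  intros H N HN. induction HN; auto.
  rewrite Avg_S, <- IHHN. apply Avg_ext. intros s Hs.
  destruct (in_seqs n m s Hs) as [E _]. pose proof (npairs_pos n Hn).
  rewrite (sumL_ext _ _ (fun _ => F s * 1)), sumL_scal, sumL_length by (intros; rewrite H by lia; ring).
  fold (npairs n). field. lra.
Qed.
End Averages.

Lemma traj_app L0 s r t : (t <= length s)%nat -> traj L0 (s ++ r) t = traj L0 s t.
Proof.
  intros. unfold traj. rewrite firstn_app. replace (t - length s)%nat with 0%nat by lia.
  simpl. rewrite app_nil_r. reflexivity.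
Qed.

Lemma traj_snoc L0 s p : traj L0 (s ++ [p]) (S (length s)) = step (traj L0 s (length s)) p.
Proof.
  unfold traj. rewrite firstn_all2 by (rewrite length_app; simpl; lia).
  rewrite firstn_all, fold_left_app. reflexivity.
Qed.

Lemma is_T1_app n L0 s r t1 : (t1 <= length s)%nat ->
  (is_T1 n L0 (s ++ r) t1 <-> is_T1 n L0 s t1).
Proof.
  intros. unfold is_T1. rewrite traj_app by lia.
  split; intros [H1 H2]; split; auto; intros t Ht; specialize (H2 t Ht);
    rewrite traj_app in * by lia; auto.
Qed.

Lemma T1_unique n L0 s t1 t2 : is_T1 n L0 s t1 -> is_T1 n L0 s t2 -> t1 = t2.
Proof.
  intros [A1 B1] [A2 B2]. destruct (Nat.lt_total t1 t2) as [H | [H | H]]; auto.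
  - specialize (B2 t1 H); lra.
  - specialize (B1 t2 H); lra.
Qed.

Lemma Phi_fold_le n a l L :
  Forall (fun p => In p (pairs n)) l -> Phi n a (fold_left step l L) <= Phi n a L.
Proof.
  revert L. induction l; simpl; intros L H; [lra |]. inversion H; subst.
  eapply Rle_trans; [apply IHl; auto | apply Phi_step_le; auto].
Qed.

Lemma Phi_small_after_T1 n L0 s t1 : Forall (fun p => In p (pairs n)) s ->
  is_T1 n L0 s t1 -> (t1 <= length s)%nat ->
  Phi n (avg n L0) (traj L0 s (length s)) < INR n.
Proof.
  intros V [H1 _] Ht. unfold traj at 1. rewrite firstn_all.
  rewrite <- (firstn_skipn t1 s) at 1. rewrite fold_left_app.
  rewrite <- (firstn_skipn t1 s) in V. apply Forall_app in V. destruct V as [_ V].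
  eapply Rle_lt_trans; [apply Phi_fold_le; auto | exact H1].
Qed.

Definition decay (n : nat) : R := 1 - 3 / (8 * INR n).

Lemma decay_bounds n : (2 <= n)%nat -> 0 <= decay n <= 1.
Proof.
  intros Hn. unfold decay. assert (2 <= INR n) by (apply (le_INR 2 n) in Hn; simpl in Hn; lra).
  assert (0 <= 3 / (8 * INR n) <= 1); [| lra].
  split; [apply Rmult_le_pos; [lra | left; apply Rinv_0_lt_compat; lra] |].
  apply (Rmult_le_reg_r (8 * INR n)); [lra |].
  unfold Rdiv. rewrite Rmult_assoc, Rinv_l by lra. lra.
Qed.

Section StoppedPotential.
Variables (n : nat) (c : R) (L0 : load).
Hypotheses (Hn : (2 <= n)%nat) (Hc : 3 <= c).
Let a := avg n L0.

Definition T1_ind (t1 : nat) (s : list (nat * nat)) : R :=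
  if excluded_middle_informative (is_T1 n L0 s t1) then 1 else 0.
Definition stopped_Psi (t1 j : nat) (s : list (nat * nat)) : R :=
  T1_ind t1 s * Psi n c a (traj L0 s (t1 + j)).

Lemma T1_ind_nonneg t1 s : 0 <= T1_ind t1 s.
Proof. unfold T1_ind. destruct (excluded_middle_informative _); lra. Qed.

Lemma T1_ind_app t1 s p : (t1 <= length s)%nat -> T1_ind t1 (s ++ [p]) = T1_ind t1 s.
Proof.
  intros. unfold T1_ind.
  destruct (excluded_middle_informative (is_T1 n L0 (s ++ [p]) t1)) as [X | X],
    (excluded_middle_informative (is_T1 n L0 s t1)) as [Y | Y]; auto;
    exfalso; rewrite (is_T1_app n L0 s [p]) in X by auto; tauto.
Qed.

Lemma T1_ind_sum_le1 N s : sumL (seq 0 (S N)) (fun t1 => T1_ind t1 s) <= 1.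
Proof.
  apply sumL_indicators_le1; [apply seq_NoDup | |].
  - intros. unfold T1_ind. destruct (excluded_middle_informative _); auto.
  - intros x y _ _. unfold T1_ind.
    destruct (excluded_middle_informative (is_T1 n L0 s x)) as [X | X]; [| lra].
    destruct (excluded_middle_informative (is_T1 n L0 s y)) as [Y | Y]; [| lra].
    intros. eapply T1_unique; eauto.
Qed.

Lemma stopped_Psi_step t1 j :
  Avg n (S (t1 + j)) (stopped_Psi t1 (S j)) <= decay n * Avg n (t1 + j) (stopped_Psi t1 j).
Proof.
  rewrite Avg_S, <- Avg_scal by auto. apply Avg_le; auto. intros s Hs.
  destruct (in_seqs n _ s Hs) as [E V].
  rewrite (sumL_ext _ _ (fun p => T1_ind t1 s * Psi n c a (step (traj L0 s (t1 + j)) p))).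
  2: { intros p _. unfold stopped_Psi. rewrite T1_ind_app by lia.
       replace (t1 + S j)%nat with (S (length s)) by lia. rewrite traj_snoc, E. reflexivity. }
  rewrite sumL_scal. unfold stopped_Psi, T1_ind.
  destruct (excluded_middle_informative _) as [X | X].
  - rewrite !Rmult_1_l. apply potential_drift; auto.
    rewrite <- E. apply (Phi_small_after_T1 n L0 s t1); auto. lia.
  - unfold Rdiv. lra.
Qed.

Lemma expected_stopped_potential t1 j :
  Avg n (t1 + j) (stopped_Psi t1 j) <= decay n ^ j * INR n * Avg n t1 (T1_ind t1).
Proof.
  induction j.
  - rewrite Nat.add_0_r. simpl. rewrite Rmult_1_l, <- Avg_scal by auto.
    apply Avg_le; auto. intros s _. unfold stopped_Psi, T1_ind. rewrite Nat.add_0_r.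
    destruct (excluded_middle_informative _) as [[HT1 _] | _]; [| lra].
    pose proof (Psi_le_Phi n c a (traj L0 s t1) ltac:(lra)). fold a in HT1. lra.
  - replace (t1 + S j)%nat with (S (t1 + j)) by lia.
    eapply Rle_trans; [apply stopped_Psi_step |].
    pose proof (decay_bounds n Hn). simpl.
    apply Rle_trans with (decay n * (decay n ^ j * INR n * Avg n t1 (T1_ind t1)));
      [apply Rmult_le_compat_l; [lra | auto] | lra].
Qed.

Lemma stopped_Psi_horizon T N t1 :
  Avg n N (fun s => if Nat.leb (t1 + T) N then stopped_Psi t1 T s else 0)
    <= decay n ^ T * INR n * Avg n N (T1_ind t1).
Proof.
  pose proof (decay_bounds n Hn). assert (0 <= decay n ^ T) by (apply pow_le; lra).
  assert (0 <= INR n) by apply pos_INR.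
  assert (0 <= Avg n N (T1_ind t1)).
  { rewrite <- (Avg_const n Hn N 0). apply Avg_le; auto. intros. apply T1_ind_nonneg. }
  destruct (Nat.leb_spec (t1 + T) N).
  - rewrite (Avg_horizon n Hn (t1 + T) (stopped_Psi t1 T)); auto.
    + rewrite (Avg_horizon n Hn t1 (T1_ind t1)); [apply expected_stopped_potential | | lia].
      intros. apply T1_ind_app; auto.
    + intros s p Hs. unfold stopped_Psi. rewrite T1_ind_app, traj_app by lia. reflexivity.
  - rewrite Avg_const by auto. apply Rmult_le_pos; auto. apply Rmult_le_pos; auto.
Qed.

Lemma Psi_ge1_not_good L : ~ good n c L0 L -> 1 <= Psi n c a L.
Proof.
  intros Hbad. unfold good in Hbad. apply not_all_ex_not in Hbad. destruct Hbad as [i Hbad].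
  apply imply_to_and in Hbad. destruct Hbad as [Hi Hbad].
  assert (2 * c < Rabs (IZR (L i) - a)).
  { unfold Rabs. destruct (Rcase_abs (IZR (L i) - a));
      apply NNPP; intro; apply Hbad; fold a; split; lra. }
  pose proof (phi_big c _ ltac:(lra) H).
  assert (phi c (IZR (L i) - a) <= Psi n c a L).
  { apply (sumL_ge_term _ (fun i => phi c (IZR (L i) - a))); [apply in_seq; lia |].
    intros; apply phi_nonneg. }
  nra.
Qed.

Lemma bad_event_witness T D N s : INR T <= D -> bad_event n c D L0 N s ->
  1 <= sumL (seq 0 (S N))
         (fun t1 => if Nat.leb (t1 + T) N then stopped_Psi t1 T s else 0).
Proof.
  intros HTD [t1 [HT1 [HD Hnot_good]]].
  assert (Ht1N : (t1 + T <= N)%nat) by (apply INR_le; rewrite plus_INR; lra).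
  eapply Rle_trans; [| apply (sumL_ge_term _ _ t1)].
  - cbv beta. rewrite (proj2 (Nat.leb_le _ _) Ht1N).
    unfold stopped_Psi, T1_ind. destruct (excluded_middle_informative _); [| contradiction].
    rewrite Rmult_1_l. apply Psi_ge1_not_good, Hnot_good; [lia | rewrite plus_INR; lra].
  - apply in_seq. lia.
  - intros. destruct (Nat.leb _ _); [| lra].
    apply Rmult_le_pos; [apply T1_ind_nonneg | apply Psi_nonneg].
Qed.

(* Markov's inequality summed over the disjoint events {T_1 = t1}. *)
Lemma bad_event_bound (T : nat) (D : R) (N : nat) : INR T <= D ->
  prob n N (bad_event n c D L0 N) <= decay n ^ T * INR n.
Proof.
  intros HTD. rewrite prob_Avg.
  pose proof (decay_bounds n Hn). assert (0 <= decay n ^ T) by (apply pow_le; lra).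
  assert (0 <= INR n) by apply pos_INR.
  apply Rle_trans with (Avg n N (fun s => sumL (seq 0 (S N))
    (fun t1 => if Nat.leb (t1 + T) N then stopped_Psi t1 T s else 0))).
  { apply Avg_le; auto. intros s _. destruct (excluded_middle_informative _) as [B | _].
    - apply (bad_event_witness T D); auto.
    - apply sumL_nonneg. intros. destruct (Nat.leb _ _); [| lra].
      apply Rmult_le_pos; [apply T1_ind_nonneg | apply Psi_nonneg]. }
  rewrite Avg_sumL by auto.
  eapply Rle_trans; [apply sumL_le; intros; apply stopped_Psi_horizon |].
  rewrite sumL_scal, <- Avg_sumL by auto.
  assert (Avg n N (fun s => sumL (seq 0 (S N)) (fun t => T1_ind t s)) <= 1).
  { rewrite <- (Avg_const n Hn N 1). apply Avg_le; auto. intros. apply T1_ind_sum_le1. }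
  apply Rle_trans with (decay n ^ T * INR n * 1); [| lra].
  apply Rmult_le_compat_l; [apply Rmult_le_pos |]; auto.
Qed.
End StoppedPotential.

Lemma exp_pow x k : exp x ^ k = exp (INR k * x).
Proof.
  induction k; simpl pow.
  - rewrite Rmult_0_l, exp_0. reflexivity.
  - rewrite IHk, <- exp_plus, S_INR. f_equal. ring.
Qed.

Lemma ln_gt_half n : (2 <= n)%nat -> / 2 < ln (INR n).
Proof.
  intros Hn. assert (Hn2 : 2 <= INR n) by (apply (le_INR 2 n) in Hn; simpl in Hn; lra).
  pose proof ln_lt_2. destruct (Req_dec (INR n) 2) as [-> | E]; [lra |].
  pose proof (ln_increasing 2 (INR n) ltac:(lra) ltac:(lra)). lra.
Qed.

(* After T >= 8 n ln n - 1 steps, decay^T * n <= 1/n, via 1 - x <= e^{-x}. *)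
Lemma decay_after_8nlnn (n T : nat) : (2 <= n)%nat ->
  8 * INR n * ln (INR n) - 1 < INR T -> decay n ^ T * INR n <= 1 / INR n.
Proof.
  intros Hn HT. assert (Hn2 : 2 <= INR n) by (apply (le_INR 2 n) in Hn; simpl in Hn; lra).
  pose proof (ln_gt_half n Hn) as Hl. pose proof (decay_bounds n Hn) as Hd.
  set (x := 3 / (8 * INR n)). change (decay n) with (1 - x) in *.
  assert (H1 : (1 - x) ^ T <= exp (INR T * - x)).
  { rewrite <- exp_pow. apply pow_incr. pose proof (exp_ineq1_le (- x)). lra. }
  assert (H2 : INR T * - x <= - (ln (INR n) + ln (INR n))).
  { enough (2 * ln (INR n) <= INR T * x) by lra.
    unfold x. replace (INR T * (3 / (8 * INR n))) with (3 * INR T / (8 * INR n)) by (field; lra).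
    apply (Rmult_le_reg_r (8 * INR n)); [lra |].
    replace (3 * INR T / (8 * INR n) * (8 * INR n)) with (3 * INR T) by (field; lra).
    assert (1 <= INR n * ln (INR n)) by nra. nra. }
  assert (H3 : exp (INR T * - x) <= / (INR n * INR n)).
  { rewrite <- exp_ln with (x := INR n * INR n) by nra. rewrite <- exp_Ropp, ln_mult by lra.
    destruct (Req_dec (INR T * - x) (- (ln (INR n) + ln (INR n)))) as [-> | E]; [lra |].
    left. apply exp_increasing. lra. }
  apply Rle_trans with (/ (INR n * INR n) * INR n).
  - apply Rmult_le_compat_r; lra.
  - right. field. lra.
Qed.

Theorem lemma4 (c : R) (hc : 10 <= c) :
  exists K C : R, forall (n : nat), (2 <= n)%nat ->
    forall (l0 : nat -> nat) (N : nat),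
      prob n N (bad_event n c (K * INR n * ln (INR n)) (fun i => Z.of_nat (l0 i)) N)
        <= C / INR n.
Proof.
  exists 8, 1. intros n Hn l0 N.
  set (D := 8 * INR n * ln (INR n)).
  assert (HD : 0 < D).
  { unfold D. pose proof (ln_gt_half n Hn). assert (2 <= INR n) by (apply (le_INR 2 n) in Hn; simpl in Hn; lra).
    apply Rmult_lt_0_compat; lra. }
  (* T = ceil(D) - 1 is an integer with D - 1 < T <= D. *)
  destruct (archimed D) as [Hup1 Hup2].
  assert (Hup : (1 <= up D)%Z) by (assert (0 < up D)%Z by (apply lt_IZR; lra); lia).
  set (T := Z.to_nat (up D - 1)).
  assert (HT : INR T = IZR (up D) - 1)
    by (unfold T; rewrite INR_IZR_INZ, Z2Nat.id, minus_IZR by lia; reflexivity).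
  eapply Rle_trans.
  - apply (bad_event_bound n c _ Hn ltac:(lra) T D N). lra.
  - apply decay_after_8nlnn; auto. fold D. lra.
Qed.
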